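(* Let $N, J \ge 1$ be integers and let $F_1,\dots,F_J:\mathbb{R}_+^N\to\mathbb{R}_+$ be upper semicontinuous, concave functions that are homogeneous of degree 1. Define $F:\mathbb{R}_+^N\to\mathbb{R}_+$ by $$F(x)=\max\Big\{\sum_{j=1}^J F_j(x_j): x_j\in\mathbb{R}_+^N \text{ for all } j,\ \sum_{j=1}^J x_j=x\Big\}.$$ Let $\Delta=\{x\in\mathbb{R}_+^N:\sum_{n=1}^N x_n=1\}$. Then $$\operatorname{hyp} F|_\Delta=\operatorname{co}\Big(\bigcup_{j=1}^J \operatorname{hyp} F_j|_\Delta\Big).$$
   Context: For a function $f:D\to\mathbb{R}$, its hypograph is $\operatorname{hyp} f=\{(x,y)\in D\times\mathbb{R}: y\le f(x)\}$; $f|_\Delta$ denotes the restriction to $\Delta$, and $\operatorname{co}A$ denotes the convex hull of a set $A$. Homogeneous of degree 1 means $F_j(\lambda x)=\lambda F_j(x)$ for all $\lambda\ge0$. *)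

From HB Require Import structures.
From mathcomp Require Import all_boot all_order all_algebra.
From mathcomp Require Import all_classical all_reals all_analysis.
Set Implicit Arguments. Unset Strict Implicit. Unset Printing Implicit Defensive.
Import Order.TTheory GRing.Theory Num.Theory.
Import numFieldNormedType.Exports.
Local Open Scope classical_set_scope.
Local Open Scope ring_scope.

Definition orthant (R : realType) (N : nat) : set 'rV[R]_N :=
  [set x | forall i, 0 <= x ord0 i].

Definition simplex (R : realType) (N : nat) : set 'rV[R]_N :=
  [set x | (forall i, 0 <= x ord0 i) /\ \sum_(i < N) x ord0 i = 1].

Definition usc_on (R : realType) (N : nat) (D : set 'rV[R]_N)
  (f : 'rV[R]_N -> R) : Prop :=
  forall x, D x -> forall e : R, 0 < e ->
    \forall y \near x, D y -> f y < f x + e.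

Definition concave_on (R : realType) (N : nat) (D : set 'rV[R]_N)
  (f : 'rV[R]_N -> R) : Prop :=
  forall x y (t : R), D x -> D y -> 0 <= t <= 1 ->
    t * f x + (1 - t) * f y <= f (t *: x + (1 - t) *: y).

Definition homogeneous1_on (R : realType) (N : nat) (D : set 'rV[R]_N)
  (f : 'rV[R]_N -> R) : Prop :=
  forall x (l : R), D x -> 0 <= l -> f (l *: x) = l * f x.

Definition hyp_on (R : realType) (N : nat) (A : set 'rV[R]_N)
  (f : 'rV[R]_N -> R) : set ('rV[R]_N * R) :=
  [set p | A p.1 /\ p.2 <= f p.1].

Definition conv_hull (R : realType) (N : nat) (S : set ('rV[R]_N * R))
  : set ('rV[R]_N * R) :=
  [set p | exists (k : nat) (l : 'I_k -> R) (q : 'I_k -> 'rV[R]_N * R),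
      (forall i, 0 <= l i) /\ \sum_(i < k) l i = 1 /\
      (forall i, S (q i)) /\
      p = (\sum_(i < k) l i *: (q i).1, \sum_(i < k) l i * (q i).2)].

Definition infconv_values (R : realType) (N J : nat)
  (Fs : 'I_J -> 'rV[R]_N -> R) (x : 'rV[R]_N) : set R :=
  [set v | exists xs : 'I_J -> 'rV[R]_N,
      (forall j, orthant (xs j)) /\ \sum_(j < J) xs j = x /\
      v = \sum_(j < J) Fs j (xs j)].

(* F(x) = max of the above set (the max is attained under the hypotheses;
   we use the supremum, which coincides with it) *)
Definition infconv (R : realType) (N J : nat)
  (Fs : 'I_J -> 'rV[R]_N -> R) (x : 'rV[R]_N) : R :=
  sup (infconv_values Fs x).

From HB Require Import structures.
From mathcomp Require Import all_boot all_order all_algebra.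
From mathcomp Require Import all_classical all_reals all_analysis.
From mathcomp Require Import lra.
Import Order.TTheory GRing.Theory Num.Theory.
Import numFieldNormedType.Exports.
Local Open Scope classical_set_scope.
Local Open Scope ring_scope.
Set Implicit Arguments. Unset Strict Implicit. Unset Printing Implicit Defensive.

(* Concavity and homogeneity of degree 1 make every F_j superadditive on the
   orthant.  Hence a convex combination sum_i l_i (x_i, y_i) of points with
   y_i <= F_(j_i) (x_i) satisfies
     sum_i l_i y_i <= sum_i F_(j_i) (l_i x_i) <= sum_j F_j (sum_(j_i = j) l_i x_i)
                   <= F (sum_i l_i x_i).
   Conversely, the decompositions x = sum_j x_j of a point x of the simplex
   form a compact set on which sum_j F_j (x_j) is upper semicontinuous, so the
   supremum F x is attained.  If y <= F x and m_j is the total mass of x_j,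
   then (x, y) is the convex combination with weights m_j of the points
   (x_j / m_j, F_j (x_j / m_j) - (F x - y)) of the hypographs of the F_j. *)

Lemma mx_entry_continuous (T : topologicalType) m n (i : 'I_m) (j : 'I_n) :
  continuous (fun M : 'M[T]_(m, n) => M i j).
Proof.
move=> M P /= MP.
exists (fun i' j' => if (i' == i) && (j' == j) then P else setT).
  move=> i' j'; case: ifP => [/andP[/eqP-> /eqP->] | _]; first exact: MP.
  exact: filterT.
by move=> M' /(_ i j); rewrite !eqxx.
Qed.

Lemma usc_compact_sup_attained (T : topologicalType) (R : realType)
    (K : set T) (g : T -> R) :
  compact K -> has_sup (g @` K) ->
  (forall v, K v -> forall e, 0 < e -> \forall w \near v, K w -> g w < g v + e) ->
  exists2 v, K v & sup (g @` K) <= g v.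
Proof.
(* Upper semicontinuity makes a cluster point of near-maximisers a maximiser. *)
move=> K_compact K_sup g_usc; set s := sup (g @` K).
pose near_max e := [set w | K w /\ s - e < g w].
pose F := filter_from [set e : R | 0 < e] near_max.
have F_proper : ProperFilter F.
  apply: filter_from_proper; last first.
    by move=> e /sup_adherent/(_ K_sup)[_ [w Kw <-] lt_w]; exists w.
  apply: filter_from_filter; first by exists 1; rewrite /= ltr01.
  move=> e1 e2 e1_gt0 e2_gt0; exists (Num.min e1 e2).
    by rewrite /= lt_min e1_gt0.
  move=> w [Kw lt_w]; do 2?split=> //; apply: le_lt_trans lt_w;
    by rewrite lerD2l lerN2 ge_min lexx ?orbT.
have [|v [Kv v_cluster]] := K_compact F F_proper.
  by exists 1 => [|w []]; rewrite /= ?ltr01.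
exists v => //; apply/ler_addgt0Pr => e e_gt0.
have e2_gt0 : 0 < e / 2 by rewrite divr_gt0.
have [w [[Kw lt_sw] /(_ Kw) lt_wv]] :=
  v_cluster (near_max (e / 2)) _
    (ex_intro2 _ _ (e / 2) e2_gt0 (@subset_refl _ _)) (g_usc v Kv _ e2_gt0).
lra.
Qed.

Section Orthant.
Context {R : realType} {N : nat}.
Implicit Types (x z : 'rV[R]_N) (l : R).

Definition mass z : R := \sum_i z ord0 i.

Lemma orthant0 : orthant (0 : 'rV[R]_N).
Proof. by move=> i; rewrite mxE. Qed.

Lemma orthantD x z : orthant x -> orthant z -> orthant (x + z).
Proof. by move=> x_ge0 z_ge0 i; rewrite mxE addr_ge0. Qed.

Lemma orthantZ l z : 0 <= l -> orthant z -> orthant (l *: z).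
Proof. by move=> l_ge0 z_ge0 i; rewrite mxE mulr_ge0. Qed.

Lemma orthant_sum (I : finType) (P : pred I) (z : I -> 'rV[R]_N) :
  (forall i, orthant (z i)) -> orthant (\sum_(i | P i) z i).
Proof.
move=> z_ge0; apply: (big_rec (fun b => orthant b)); first exact: orthant0.
by move=> i b _; apply: orthantD.
Qed.

Lemma closed_orthant : closed (@orthant R N).
Proof.
have -> : @orthant R N = \bigcap_i ((fun z => z ord0 i) @^-1` [set r | 0 <= r]).
  by apply/seteqP; split=> z z_ge0 i => [_|]; [exact: z_ge0 | exact: z_ge0 i I].
apply: closed_bigI => i _; apply: (proj1 (continuous_closedP _)).
  exact: coord_continuous.
exact: closed_ge.
Qed.

Lemma mass_sum (I : finType) (P : pred I) (z : I -> 'rV[R]_N) :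
  mass (\sum_(i | P i) z i) = \sum_(i | P i) mass (z i).
Proof.
by rewrite /mass exchange_big /=; apply: eq_bigr => n _; rewrite summxE.
Qed.

Lemma massZ l z : mass (l *: z) = l * mass z.
Proof. by rewrite /mass mulr_sumr; apply: eq_bigr => n _; rewrite mxE. Qed.

Lemma mass_ge0 z : orthant z -> 0 <= mass z.
Proof. by move=> z_ge0; apply: sumr_ge0. Qed.

Lemma entry_le_mass z i : orthant z -> z ord0 i <= mass z.
Proof. by move=> z_ge0; rewrite /mass (bigD1 i) //= lerDl sumr_ge0. Qed.

Lemma mass_eq0 z : orthant z -> mass z = 0 -> z = 0.
Proof.
move=> z_ge0 z_mass0; apply/rowP => i; rewrite mxE.
exact: (psumr_eq0P (fun i _ => z_ge0 i) z_mass0).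
Qed.

Lemma simplex_mass z : simplex z -> mass z = 1.
Proof. by case. Qed.

Lemma simplex_normalize z :
  orthant z -> mass z != 0 -> simplex ((mass z)^-1 *: z).
Proof.
move=> z_ge0 z_mass_neq0; split.
  by apply: orthantZ; rewrite ?invr_ge0 ?mass_ge0.
by rewrite -/(mass _) massZ mulVf.
Qed.

Lemma simplex_convex (I : finType) (l : I -> R) (z : I -> 'rV[R]_N) :
  (forall i, 0 <= l i) -> \sum_i l i = 1 -> (forall i, simplex (z i)) ->
  simplex (\sum_i l i *: z i).
Proof.
move=> l_ge0 l_sum1 z_simplex; split.
  by apply: orthant_sum => i; apply: orthantZ => //; case: (z_simplex i).
rewrite -/(mass _) mass_sum -l_sum1; apply: eq_bigr => i _.
by rewrite massZ simplex_mass ?mulr1.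
Qed.

End Orthant.

Section ConcaveHomogeneous.
Context {R : realType} {N : nat} {f : 'rV[R]_N -> R}.
Hypotheses (f_concave : concave_on (@orthant R N) f)
  (f_hom : homogeneous1_on (@orthant R N) f).
Implicit Types x y z : 'rV[R]_N.

Lemma homogeneous1_0 : f 0 = 0.
Proof. by have := f_hom orthant0 (lexx 0); rewrite scale0r mul0r. Qed.

(* f (x + y) = f (1/2 (2 x) + 1/2 (2 y)) >= 1/2 f (2 x) + 1/2 f (2 y) = f x + f y *)
Lemma concave_homogeneous_superadditive x y :
  orthant x -> orthant y -> f x + f y <= f (x + y).
Proof.
move=> x_ge0 y_ge0; have two_ge0 : (0 : R) <= 2 by [].
have half_between : 0 <= (2^-1 : R) <= 1 by apply/andP; split; lra.
have := f_concave (orthantZ two_ge0 x_ge0) (orthantZ two_ge0 y_ge0) half_between.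
have -> : 1 - 2^-1 = 2^-1 :> R by lra.
rewrite !scalerA mulVf ?pnatr_eq0 // !scale1r !f_hom //.
by rewrite !mulrA mulVf ?pnatr_eq0 // !mul1r.
Qed.

Lemma concave_homogeneous_sum_superadditive (I : finType) (P : pred I)
    (z : I -> 'rV[R]_N) :
  (forall i, orthant (z i)) ->
  \sum_(i | P i) f (z i) <= f (\sum_(i | P i) z i).
Proof.
move=> z_ge0; suff : orthant (\sum_(i | P i) z i) /\
    \sum_(i | P i) f (z i) <= f (\sum_(i | P i) z i) by case.
apply: (big_rec2 (fun a b => orthant b /\ a <= f b)).
  by rewrite homogeneous1_0; split; [exact: orthant0 | exact: lexx].
move=> i a b _ [b_ge0 le_ab]; split; first exact: orthantD.
apply: le_trans (concave_homogeneous_superadditive (z_ge0 i) b_ge0).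
by rewrite lerD2l.
Qed.

Hypothesis f_ge0 : forall x, orthant x -> 0 <= f x.

Lemma concave_homogeneous_le_const1 z :
  (forall i, 0 <= z ord0 i <= 1) -> f z <= f (const_mx 1).
Proof.
move=> z_01; have z_ge0 : orthant z by move=> i; case/andP: (z_01 i).
have d_ge0 : orthant (const_mx 1 - z).
  by move=> i; rewrite !mxE subr_ge0; case/andP: (z_01 i).
rewrite -(subrKC z (const_mx 1)).
apply: le_trans (concave_homogeneous_superadditive z_ge0 d_ge0).
by rewrite lerDl f_ge0.
Qed.

End ConcaveHomogeneous.

Section Decomposition.
Context {R : realType} {N J : nat}.
Implicit Types (x : 'rV[R]_N) (xs : 'I_J -> 'rV[R]_N).

Definition decomposition x : set ('I_J -> 'rV[R]_N) :=
  [set xs | (forall j, orthant (xs j)) /\ \sum_j xs j = x].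

Lemma decomposition_entry_le1 x xs : simplex x -> decomposition x xs ->
  forall j i, 0 <= xs j ord0 i <= 1.
Proof.
move=> x_simplex [xs_ge0 xs_sum] j i; rewrite xs_ge0 /=.
have x_ge0 : orthant x by case: x_simplex.
rewrite -(simplex_mass x_simplex); apply: le_trans (entry_le_mass i x_ge0).
rewrite -xs_sum summxE (bigD1 j) //= lerDl sumr_ge0 // => k _.
exact: xs_ge0.
Qed.

Lemma closed_decomposition x :
  closed [set v : 'rV['rV[R]_N]_J | decomposition x (v ord0)].
Proof.
have -> : [set v : 'rV['rV[R]_N]_J | decomposition x (v ord0)] =
    (\bigcap_j ((fun v => v ord0 j) @^-1` @orthant R N)) `&`
    ((fun v => \sum_j v ord0 j) @^-1` [set x]).
  apply/seteqP; split=> v [v_ge0 v_sum].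
    by split=> // j _; apply: v_ge0.
  by split=> // j; apply: v_ge0.
apply: closedI.
  apply: closed_bigI => j _; apply: (proj1 (continuous_closedP _)).
    exact: mx_entry_continuous.
  exact: closed_orthant.
apply: (proj1 (continuous_closedP _)).
  apply: (continuous_big add_continuous) => j _; exact: mx_entry_continuous.
apply: accessible_closed_set1; apply: hausdorff_accessible; exact: norm_hausdorff.
Qed.

Lemma compact_decomposition x : simplex x ->
  compact [set v : 'rV['rV[R]_N]_J | decomposition x (v ord0)].
Proof.
move=> x_simplex.
pose unit_box := [set z : 'rV[R]_N | forall i, `[0, 1]%classic (z ord0 i)].
have unit_box_compact : compact unit_box.
  exact: (rV_compact (fun i => @segment_compact R 0 1)).
apply: (subclosed_compact _ (rV_compact (fun j : 'I_J => unit_box_compact))).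
  exact: closed_decomposition.
move=> v v_dec j i; rewrite /= in_itv /=.
exact: decomposition_entry_le1 x_simplex v_dec j i.
Qed.

End Decomposition.

Section Infconv.
Variables (R : realType) (N J : nat) (Fs : 'I_J -> 'rV[R]_N -> R).
Hypotheses (J_gt0 : (0 < J)%N)
  (Fs_ge0 : forall j x, orthant x -> 0 <= Fs j x)
  (Fs_usc : forall j, usc_on (@orthant R N) (Fs j))
  (Fs_concave : forall j, concave_on (@orthant R N) (Fs j))
  (Fs_hom : forall j, homogeneous1_on (@orthant R N) (Fs j)).

Lemma infconv_valuesE x :
  infconv_values Fs x = (fun xs => \sum_j Fs j (xs j)) @` decomposition x.
Proof.
by apply/seteqP; split=> [_ [xs [? [? ->]]] | _ [xs [? ?] <-]]; exists xs.
Qed.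

Lemma infconv_has_sup x : simplex x -> has_sup (infconv_values Fs x).
Proof.
move=> x_simplex; rewrite infconv_valuesE; split.
  pose j0 := Ordinal J_gt0; pose xs j := if j == j0 then x else 0.
  exists (\sum_j Fs j (xs j)), xs => //; split.
    by move=> j; rewrite /xs; case: eqP => _; [case: x_simplex | exact: orthant0].
  by rewrite (bigD1 j0) //= /xs eqxx big1 ?addr0 // => j /negbTE ->.
exists (\sum_j Fs j (const_mx 1)) => _ [xs xs_dec <-].
apply: ler_sum => j _.
apply: (concave_homogeneous_le_const1 (Fs_concave j) (Fs_hom j) (Fs_ge0 j)).
exact: decomposition_entry_le1 x_simplex xs_dec j.
Qed.

Lemma sum_components_usc (v : 'rV['rV[R]_N]_J) e :
  (forall j, orthant (v ord0 j)) -> 0 < e ->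
  \forall w \near v, (forall j, orthant ((w : 'rV['rV[R]_N]_J) ord0 j)) ->
    \sum_j Fs j (w ord0 j) < \sum_j Fs j (v ord0 j) + e.
Proof.
move=> v_ge0 e_gt0; pose e' := e / J.+1%:R.
have e'_gt0 : 0 < e' by rewrite divr_gt0.
have near_j j : \forall w \near v,
    orthant ((w : 'rV['rV[R]_N]_J) ord0 j) ->
    Fs j (w ord0 j) < Fs j (v ord0 j) + e'.
  exact: (@mx_entry_continuous _ _ _ ord0 j v _ (Fs_usc j (v_ge0 j) e'_gt0)).
apply: filterS _ (filter_forall _ near_j) => w w_near w_ge0.
apply: (@le_lt_trans _ _ (\sum_j (Fs j (v ord0 j) + e'))).
  by apply: ler_sum => j _; apply/ltW/w_near/w_ge0.
rewrite big_split /= sumr_const card_ord ltrD2l -mulr_natl /e' mulrCA gtr_pMr //.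
by rewrite ltr_pdivrMr ?ltr0n // mul1r ltr_nat.
Qed.

Lemma infconv_attained x : simplex x ->
  exists2 xs, decomposition x xs & infconv Fs x <= \sum_j Fs j (xs j).
Proof.
move=> x_simplex.
pose G (v : 'rV['rV[R]_N]_J) := \sum_j Fs j (v ord0 j).
pose K := [set v : 'rV['rV[R]_N]_J | decomposition x (v ord0)].
have valuesE : infconv_values Fs x = G @` K.
  rewrite infconv_valuesE; apply/seteqP.
  split=> _ [xs xs_dec <-]; last by exists (xs ord0).
  have row_xs : (\row_j xs j) ord0 = xs by apply/funext => j; rewrite mxE.
  by exists (\row_j xs j); rewrite /K /G /= row_xs.
have [||v v_dec le_sup] :=
  @usc_compact_sup_attained _ _ K G (compact_decomposition x_simplex).
- by rewrite -valuesE; exact: infconv_has_sup.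
- move=> v [v_ge0 _] e e_gt0.
  apply: filterS _ (sum_components_usc v_ge0 e_gt0) => w w_lt [w_ge0 _].
  exact: w_lt.
by exists (v ord0) => //; rewrite /infconv valuesE.
Qed.

Lemma hyp_infconv_sub_conv_hull :
  hyp_on (@simplex R N) (infconv Fs) `<=`
  conv_hull (\bigcup_(j in [set: 'I_J]) hyp_on (@simplex R N) (Fs j)).
Proof.
move=> [x y] [/= x_simplex y_le].
have [xs [xs_ge0 xs_sum] le_xs] := infconv_attained x_simplex.
pose gap := \sum_j Fs j (xs j) - y.
have gap_ge0 : 0 <= gap by rewrite subr_ge0 (le_trans y_le).
(* Pieces of zero mass get weight zero, so any point of a hypograph will do. *)
pose q j := if mass (xs j) == 0 then (x, Fs j x)
  else ((mass (xs j))^-1 *: xs j, Fs j ((mass (xs j))^-1 *: xs j) - gap).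
have mass_xs_sum : \sum_j mass (xs j) = 1 by rewrite -mass_sum xs_sum simplex_mass.
have q_scaled j : mass (xs j) *: (q j).1 = xs j /\
    mass (xs j) * (q j).2 = Fs j (xs j) - gap * mass (xs j).
  rewrite /q; case: eqP => [m0 | /eqP m_neq0] /=.
    rewrite m0 scale0r mul0r mulr0 subr0 (mass_eq0 (xs_ge0 j) m0).
    by rewrite homogeneous1_0.
  have inv_ge0 : 0 <= (mass (xs j))^-1 by rewrite invr_ge0 mass_ge0.
  rewrite scalerA mulfV // scale1r mulrBr (Fs_hom _ (xs_ge0 j) inv_ge0).
  by rewrite mulrA mulfV // mul1r mulrC.
exists J, (fun j => mass (xs j)), q; split; [|split; [|split]].
- by move=> j; apply: mass_ge0.
- exact: mass_xs_sum.
- move=> j; exists j => //; rewrite /q.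
  case: eqP => [_ | /eqP m_neq0]; split=> //=.
    exact: simplex_normalize.
  by rewrite lerBlDr lerDl.
- congr pair.
    by rewrite -[LHS]xs_sum; apply: eq_bigr => j _; case: (q_scaled j).
  under eq_bigr do rewrite (proj2 (q_scaled _)).
  by rewrite sumrB -mulr_sumr mass_xs_sum mulr1 /gap subKr.
Qed.

Lemma conv_hull_sub_hyp_infconv :
  conv_hull (\bigcup_(j in [set: 'I_J]) hyp_on (@simplex R N) (Fs j)) `<=`
  hyp_on (@simplex R N) (infconv Fs).
Proof.
move=> _ [k [l [q [l_ge0 [l_sum1 [q_hyp ->]]]]]].
have /choice[c q_c] : forall i, exists j, hyp_on (@simplex R N) (Fs j) (q i).
  by move=> i; have [j _ q_j] := q_hyp i; exists j.
have q_simplex i : simplex (q i).1 by case: (q_c i).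
have q_ge0 i : orthant (q i).1 by case: (q_simplex i).
have x_simplex := simplex_convex l_ge0 l_sum1 q_simplex.
have sum_by_class (V : zmodType) (g : 'I_k -> V) :
    \sum_i g i = \sum_j \sum_(i | c i == j) g i by rewrite (partition_big c predT).
split=> //=; pose xs j := \sum_(i | c i == j) l i *: (q i).1.
have xs_dec : decomposition (\sum_i l i *: (q i).1) xs.
  split; last by rewrite /xs -sum_by_class.
  by move=> j; apply: orthant_sum => i; apply: orthantZ.
apply: le_trans (sup_upper_bound (infconv_has_sup x_simplex) _); last first.
  by rewrite infconv_valuesE; exists xs.
rewrite sum_by_class; apply: ler_sum => j _.
apply: le_trans (concave_homogeneous_sum_superadditive (Fs_concave j)
  (Fs_hom j) _ (fun i => orthantZ (l_ge0 i) (q_ge0 i))).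
apply: ler_sum => i /eqP <-; rewrite (Fs_hom _ (q_ge0 i) (l_ge0 i)).
by apply: ler_wpM2l => //; case: (q_c i).
Qed.

End Infconv.

Theorem theorem3 (R : realType) (N J : nat) (Fs : 'I_J -> 'rV[R]_N -> R) :
  (0 < N)%N -> (0 < J)%N ->
  (forall j x, orthant x -> 0 <= Fs j x) ->
  (forall j, usc_on (@orthant R N) (Fs j)) ->
  (forall j, concave_on (@orthant R N) (Fs j)) ->
  (forall j, homogeneous1_on (@orthant R N) (Fs j)) ->
  hyp_on (@simplex R N) (infconv Fs) =
  conv_hull (\bigcup_(j in [set: 'I_J]) hyp_on (@simplex R N) (Fs j)).
Proof.
move=> _ J_gt0 Fs_ge0 Fs_usc Fs_concave Fs_hom; apply/seteqP; split.
  exact: hyp_infconv_sub_conv_hull.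
exact: conv_hull_sub_hyp_infconv.
Qed.
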